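(* Let $n\ge k\ge 1$ and let $Z_1,\ldots,Z_k$ be subsets of $[n]$, each of cardinality $k-1$, such that $|\bigcap_{i\in I}Z_i|\le k-|I|$ for every nonempty subset $I\subseteq[k]$, and additionally $|Z_i\cap Z_{i'}|\le 1$ for all $i\ne i'$. Then there is a multiset that arises as the multiset union of exactly one choice $(\sigma,(S_1,\ldots,S_k))$.
   Context: $[n]=\{1,\ldots,n\}$. A choice is a pair $(\sigma,(S_1,\ldots,S_k))$ where $\sigma$ is a permutation of $[k]$ and $S_i\subseteq Z_i$ with $|S_i|=\sigma(i)-1$ for each $i\in[k]$; its multiset union is $S_1\uplus\cdots\uplus S_k$, the multiset in which each $j\in[n]$ has multiplicity equal to the number of $i$ with $j\in S_i$. Two different choices are counted as different even if they have the same permutation (i.e., choices differ if either $\sigma$ or some $S_i$ differs). *)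

From mathcomp Require Import all_boot all_order all_fingroup.
Set Implicit Arguments.
Unset Strict Implicit.
Unset Printing Implicit Defensive.

(* [n] is represented by 'I_n (element j stands for j+1), [k] by 'I_k.
   A permutation sigma of [k] (values 1..k) is represented 0-based by
   s : {perm 'I_k}, with s i = sigma(i) - 1; so |S_i| = sigma(i)-1 becomes
   #|S_i| = s i. *)

Definition choice_t (n k : nat) : finType :=
  ({perm 'I_k} * {ffun 'I_k -> {set 'I_n}})%type.

Definition is_choice (n k : nat) (Z : 'I_k -> {set 'I_n}) (c : choice_t n k) : bool :=
  [forall i : 'I_k, (c.2 i \subset Z i) && (#|c.2 i| == nat_of_ord (c.1 i))].

Definition munion (n k : nat) (S : {ffun 'I_k -> {set 'I_n}}) : {ffun 'I_n -> nat} :=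
  [ffun j : 'I_n => #|[set i : 'I_k | j \in S i]|].

From mathcomp Require Import all_boot all_order all_fingroup.
From mathcomp Require Import zify.
Set Implicit Arguments.
Unset Strict Implicit.
Unset Printing Implicit Defensive.

(* Write k = K+1; the sets Z_i have size K, pairwise meet in at most one
   point, and (taking I = [k]) no point lies in all of them.
   The unique multiset comes from "layers".  After reordering the sets by a
   permutation rho so that the sets in positions K-1, K and 0 have no common
   point (good_order), we build greedily, for p = 0, ..., K, a p-subset T p of
   the p-th set which absorbs everything earlier layers have in that set, and
   whose part in the previous set already lies in the previous layer
   (layers_exist).  Since the sets pairwise meet in at most one point, the
   q-th set then meets layers 0..p in fewer than p points whenever q < p
   (meet_prefix_union_lt).  These properties form a uniqueness criterion
   (layer_choice_unique): a rival choice with the same multiset union must,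
   by downward induction on p, put the set of size p at position rho p and
   make it equal to T p, since any point of it outside layers 0..p would be
   counted once too often. *)

Lemma exists_subset_card (T : finType) (D : {set T}) m : m <= #|D| ->
  exists2 N : {set T}, N \subset D & #|N| = m.
Proof.
elim: m => [|m IH] mD; first by exists set0; rewrite ?sub0set ?cards0.
have [N ND cardN] := IH (ltnW mD).
have /properP[_ [x xD xNN]] : N \proper D by rewrite properEcard ND cardN.
by exists (x |: N); rewrite ?subUset ?sub1set ?xD ?ND // cardsU1 xNN cardN.
Qed.

Definition prefix_union (T : finType) (L : nat -> {set T}) (p : nat) : {set T} :=
  \bigcup_(r < p.+1) L r.

Lemma prefix_unionS (T : finType) (L : nat -> {set T}) p :
  prefix_union L p.+1 = prefix_union L p :|: L p.+1.
Proof. by rewrite /prefix_union big_ord_recr. Qed.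

Lemma mem_prefix_union (T : finType) (L : nat -> {set T}) p x :
  reflect (exists2 r, r <= p & x \in L r) (x \in prefix_union L p).
Proof.
apply: (iffP bigcupP) => [[r _ xLr]|[r rp xLr]]; first by exists r => //; rewrite -ltnS.
by exists (Ordinal (rp : r < p.+1)).
Qed.

Lemma meet_prefix_union_le (T : finType) (L : nat -> {set T}) (X : {set T}) p :
  L 0 = set0 -> (forall r, 0 < r <= p -> #|X :&: L r| <= 1) ->
  #|X :&: prefix_union L p| <= p.
Proof.
move=> L0; elim: p => [|p IH] meetL.
  by rewrite /prefix_union big_ord1 L0 setI0 cards0.
rewrite prefix_unionS setIUr (leq_trans (leq_card_setU _ _).1) //.
have := IH (fun r hr => meetL r (ltac:(lia))); have := meetL p.+1 (ltac:(lia)).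
lia.
Qed.

Section Uniqueness.
Variables (n k : nat) (Z : 'I_k -> {set 'I_n}) (rho : {perm 'I_k}).
Variable T : nat -> {set 'I_n}.
Hypothesis T_sub : forall p : 'I_k, T p \subset Z (rho p).
Hypothesis T_card : forall p : 'I_k, #|T p| = p.
Hypothesis T_prev : forall (p : 'I_k) (q : nat), q < p -> T q :&: Z (rho p) \subset T p.
Hypothesis T_meet : forall p q : 'I_k, q < p -> #|Z (rho q) :&: prefix_union T p| < p.

Definition layer_choice : choice_t n k := ((rho^-1)%g, [ffun i => T ((rho^-1)%g i)]).

Lemma layer_choiceP : is_choice Z layer_choice.
Proof.
apply/forallP => i /=; rewrite ffunE T_card eqxx andbT.
by have := T_sub ((rho^-1)%g i); rewrite permKV.
Qed.

Section Rival.
Variables (s : {perm 'I_k}) (S : {ffun 'I_k -> {set 'I_n}}).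
Hypothesis S_choice : is_choice Z (s, S).
Hypothesis S_union : munion S = munion layer_choice.2.

Lemma S_sub i : S i \subset Z i.
Proof. by have /andP[] := forallP S_choice i. Qed.

Lemma S_card i : #|S i| = s i.
Proof. by have /andP[_ /eqP] := forallP S_choice i. Qed.

Lemma S_mult x : #|[set i | x \in S i]| = #|[set i | x \in T ((rho^-1)%g i)]|.
Proof.
have := congr1 (fun m : {ffun 'I_n -> nat} => m x) S_union; rewrite /munion /= !ffunE.
by under [in X in _ = X -> _]eq_finset => i do rewrite ffunE.
Qed.

Definition agrees (p : 'I_k) : Prop := s (rho p) = p /\ S (rho p) = T p.

Section Step.
Variable p : 'I_k.
Hypothesis agrees_above : forall r : 'I_k, p < r -> agrees r.

Local Notation w := ((s^-1)%g p).

Lemma rival_index_le : (rho^-1)%g w <= p.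
Proof.
rewrite leqNgt; apply/negP => lt; have [] := agrees_above lt.
by rewrite !permKV => sw _; move: lt; rewrite -sw ltnn.
Qed.

(* Every point of S w lies in layers 0..p: otherwise it is covered once more
   by the rival choice than by the layers above p. *)
Lemma rival_in_prefix : S w \subset prefix_union T p.
Proof.
apply/subsetP => x xS; apply/negPn/negP => xU.
have notT r : r <= p -> x \notin T r.
  by move=> rp; apply: contra xU => xT; apply/mem_prefix_union; exists r.
suff: [set i | x \in T ((rho^-1)%g i)] \proper [set i | x \in S i].
  by move/proper_card; rewrite S_mult ltnn.
apply/properP; split; last by exists w; rewrite !inE // notT // rival_index_le.
apply/subsetP => i; rewrite !inE => xT.
have pr : p < (rho^-1)%g i by rewrite ltnNge; apply: contraL xT; apply: notT.
by have [_] := agrees_above pr; rewrite permKV => ->.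
Qed.

Lemma rival_index_eq : (rho^-1)%g w = p.
Proof.
apply/val_inj/eqP; rewrite /= eqn_leq rival_index_le /= leqNgt; apply/negP => lt.
have := T_meet lt; rewrite permKV ltnNge => /negP; apply.
have cardSw : #|S w| = p by rewrite S_card permKV.
rewrite -[X in X <= _]cardSw.
by apply/subset_leq_card; rewrite subsetI S_sub rival_in_prefix.
Qed.

Lemma agrees_step : agrees p.
Proof.
have wE : w = rho p by rewrite -(congr1 rho rival_index_eq) permKV.
split; first by rewrite -wE permKV.
apply/eqP; rewrite eqEcard T_card -wE S_card permKV leqnn andbT.
apply/subsetP => x xS; have /mem_prefix_union[r] := subsetP rival_in_prefix x xS.
have xZ : x \in Z (rho p) by rewrite -wE; apply: (subsetP (S_sub w)).
rewrite leq_eqVlt => /orP[/eqP-> //|rp xT].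
by apply: (subsetP (T_prev rp)); rewrite in_setI xT.
Qed.
End Step.

Lemma rival_agrees (p : 'I_k) : agrees p.
Proof.
suff ind m (q : 'I_k) : k - m <= q -> agrees q by apply: (ind k); rewrite subnn.
elim: m q => [|m IH] q qm; first by move: (ltn_ord q); rewrite subn0 in qm; lia.
by apply: agrees_step => r qr; apply: IH; move: (ltn_ord r); lia.
Qed.

Lemma rival_eq : (s, S) = layer_choice.
Proof.
congr pair.
  apply/permP => i; have [si _] := rival_agrees ((rho^-1)%g i).
  by apply: val_inj; rewrite /= -si permKV.
by apply/ffunP => i; rewrite ffunE; have [_] := rival_agrees ((rho^-1)%g i); rewrite permKV.
Qed.
End Rival.

Lemma layer_choice_unique :
  [set c : choice_t n k | is_choice Z c && (munion c.2 == munion layer_choice.2)] =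
  [set layer_choice].
Proof.
apply/setP => -[s S]; rewrite !inE; apply/andP/eqP => [[Sc /eqP SU]|->].
  exact: rival_eq.
by rewrite layer_choiceP.
Qed.
End Uniqueness.

Section Layers.
Variables (n K : nat) (W : nat -> {set 'I_n}).
Hypothesis W_card : forall p, p <= K -> #|W p| = K.
Hypothesis W_pair : forall p q, p <= K -> q <= K -> p != q -> #|W p :&: W q| <= 1.
Hypothesis last_pair_W0 : W K.-1 :&: W K :&: W 0 = set0.

Local Notation Y := (W K.-1 :&: W K).

Definition layer_inv (T : nat -> {set 'I_n}) (q : nat) : Prop :=
  [/\ T q \subset W q, #|T q| = q,
      (forall r, r < q -> T r :&: W q \subset T q),
      (0 < q -> W q.-1 :&: T q \subset T q.-1) &
      Y :&: W q \subset T q].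

Definition next_layer (T : nat -> {set 'I_n}) (p : nat) (S : {set 'I_n}) : Prop :=
  [/\ S \subset W p.+1, #|S| = p.+1,
      (forall r, r <= p -> T r :&: W p.+1 \subset S),
      W p :&: S \subset T p &
      Y :&: W p.+1 \subset S].

Definition set_layer (T : nat -> {set 'I_n}) (m : nat) (S : {set 'I_n}) :
  nat -> {set 'I_n} := fun q => if q == m then S else T q.

(* The invariant at q only looks at layers 0..q, so later layers may change. *)
Lemma layer_inv_set T m S q : q < m -> layer_inv T q -> layer_inv (set_layer T m S) q.
Proof.
rewrite /set_layer => qm [TW cardT prev back shared].
have old r : r <= q -> (r == m) = false by move=> rq; apply/negbTE; lia.
rewrite /layer_inv old //; split=> //.
- by move=> r rq; rewrite old ?(ltnW rq) //; apply: prev.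
- by move=> q0; rewrite old ?leq_pred //; apply: back.
Qed.

Lemma layer_inv_next T p S : next_layer T p S -> layer_inv (set_layer T p.+1 S) p.+1.
Proof.
rewrite /set_layer => -[SW cardS prev back shared].
have old r : r <= p -> (r == p.+1) = false by move=> rp; apply/negbTE; lia.
rewrite /layer_inv eqxx; split=> //= [r|_]; last by rewrite old.
by rewrite ltnS => rp; rewrite old //; apply: prev.
Qed.

Section Extend.
Variables (T : nat -> {set 'I_n}) (p : nat).
Hypothesis T_inv : forall q, q <= p -> layer_inv T q.

Lemma layer0_empty : T 0 = set0.
Proof. by have [_ /eqP] := T_inv (leq0n p); rewrite cards_eq0 => /eqP. Qed.

Lemma last_layer : p.+1 = K -> next_layer T p (W p.+1).
Proof.
move=> pK; have [_ _ _ _ lastp] := T_inv (leqnn p).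
split=> //; first by rewrite W_card ?pK.
- by move=> r _; rewrite subsetIr.
- apply: subset_trans lastp; rewrite -pK /=.
  by apply/subsetP => x; rewrite !inE => /andP[-> ->].
- by rewrite subsetIr.
Qed.

(* An intermediate layer: keep the forced points B of W (p+1), namely those
   in earlier layers or shared with the last two sets, and fill up with
   points of W (p+1) outside the earlier layers, W p and Y. *)
Lemma middle_layer : p.+2 <= K -> exists S, next_layer T p S.
Proof.
move=> pK; set X := W p.+1; set U := prefix_union T p.
set B := (X :&: U) :|: (Y :&: X).
have TW r : r <= p -> T r \subset W r by move=> rp; have [] := T_inv rp.
have cardXU : #|X :&: U| <= p.
  apply: meet_prefix_union_le layer0_empty _ => r rp.
  have [rK neq] : r <= K /\ p.+1 != r by split; [lia|apply/eqP; lia].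
  apply: leq_trans (W_pair (ltnW pK) rK neq).
  by apply/subset_leq_card/setIS/TW; lia.
have cardYX : #|Y :&: X| <= 1.
  by apply: leq_trans (subset_leq_card (subsetIl _ _)) _; apply: W_pair; lia.
have cardB : #|B| <= p.+1 by apply: leq_trans (leq_card_setU _ _).1 _; lia.
have cardXWp : #|X :&: W p| <= 1 by apply: W_pair; lia.
set D := X :\: (U :|: W p :|: Y).
have cardD : p.+1 - #|B| <= #|D|.
  have : #|X :&: (U :|: W p :|: Y)| <= #|B| + 1.
    rewrite !setIUr [_ :&: Y]setIC setUAC -/B.
    by apply: leq_trans (leq_card_setU _ _).1 _; rewrite leq_add2l.
  rewrite /D cardsD /X W_card; lia.
have [N ND cardN] := exists_subset_card cardD.
have NX : N \subset X by apply: subset_trans ND (subsetDl _ _).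
have outN x : x \in N -> x \notin U :|: W p :|: Y.
  by move=> /(subsetP ND); rewrite inE => /andP[].
have disjBN : [disjoint B & N].
  apply/pred0P => x /=; apply/negP => /andP[xB /outN]; apply/negP.
  by case/setUP: xB => /setIP[xU xY]; rewrite !in_setU ?xU ?xY ?orbT.
exists (B :|: N); split.
- by rewrite subUset NX !subUset subsetIl subsetIr.
- have [_] := leq_card_setU B N; rewrite disjBN => /eqP->; rewrite cardN; lia.
- move=> r rp; apply/subsetP => x /setIP[xT xX].
  apply/setUP; left; apply/setUP; left; rewrite in_setI xX.
  by apply/mem_prefix_union; exists r.
- apply/subsetP => x /setIP[xWp /setUP[/setUP[/setIP[_ xU]|/setIP[xY _]]|/outN]].
  + case/mem_prefix_union: xU => r; rewrite leq_eqVlt => /orP[/eqP-> //|rp xT].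
    have [_ _ prev _ _] := T_inv (leqnn p).
    by apply: (subsetP (prev r rp)); rewrite in_setI xT.
  + have [_ _ _ _ lastp] := T_inv (leqnn p).
    by apply: (subsetP lastp); rewrite in_setI xY.
  + by rewrite !in_setU xWp orbT.
- by apply/subsetP => x xYX; apply/setUP; left; apply/setUP; right.
Qed.
End Extend.

Lemma layers_exist : exists T : nat -> {set 'I_n}, forall q, q <= K -> layer_inv T q.
Proof.
suff tower p : p <= K -> exists T, forall q, q <= p -> layer_inv T q by exact: tower.
elim: p => [_|p IH pK].
  exists (fun=> set0) => q; rewrite leqn0 => /eqP->.
  by split; rewrite ?sub0set ?cards0 // last_pair_W0.
have [T T_inv] := IH (ltnW pK).
have [S next] : exists S, next_layer T p S.
  case: (eqVneq p.+1 K) => [/(last_layer T_inv)|pK1]; first by exists (W p.+1).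
  by apply: (middle_layer T_inv); lia.
exists (set_layer T p.+1 S) => q; rewrite leq_eqVlt => /orP[/eqP->|qp].
  exact: layer_inv_next.
exact: layer_inv_set (T_inv _ qp).
Qed.

Section Tower.
Variable T : nat -> {set 'I_n}.
Hypothesis T_inv : forall q, q <= K -> layer_inv T q.

Lemma meet_next_prefix q : q < K -> W q :&: prefix_union T q.+1 \subset T q.
Proof.
move=> qK; have [_ _ prev _ _] := T_inv (ltnW qK); have [_ _ _ back _] := T_inv qK.
apply/subsetP => x /setIP[xW /mem_prefix_union[r]].
rewrite leq_eqVlt => /orP[/eqP-> xT|]; first by apply: (subsetP (back isT)); rewrite in_setI xW.
rewrite ltnS leq_eqVlt => /orP[/eqP-> //|rq xT].
by apply: (subsetP (prev r rq)); rewrite in_setI xT.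
Qed.

(* For q < p, the set W q meets layers 0..p in fewer than p points: q of them
   in layer q and at most one in each later layer q+2, ..., p. *)
Lemma meet_prefix_union_lt q p : q < p <= K -> #|W q :&: prefix_union T p| < p.
Proof.
elim: p => [|p IH] /andP[qp pK] //; rewrite ltnS.
move: qp; rewrite ltnS leq_eqVlt => /orP[/eqP->|qp]; last first.
  rewrite prefix_unionS setIUr (leq_trans (leq_card_setU _ _).1) //.
  have meetT : #|W q :&: T p.+1| <= 1.
    have [TW _ _ _ _] := T_inv pK.
    have [qK neq] : q <= K /\ q != p.+1 by split; [lia|apply/eqP; lia].
    apply: leq_trans (W_pair qK pK neq).
    exact/subset_leq_card/setIS.
  by have := IH (ltac:(lia)); lia.
have [_ cardT _ _ _] := T_inv (ltnW pK).
by rewrite -[X in _ <= X]cardT; apply/subset_leq_card/meet_next_prefix.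
Qed.
End Tower.
End Layers.

Lemma meet3_avoid (I T : finType) (Z : I -> {set T}) a b t y :
  #|Z a :&: Z b| <= 1 -> y \in Z a :&: Z b -> y \notin Z t -> Z a :&: Z b :&: Z t = set0.
Proof.
move=> cardab yab ynt; have -> : Z a :&: Z b = [set y].
  by apply/esym/eqP; rewrite eqEcard sub1set yab cards1.
by apply/setP => x; rewrite !inE; case: eqP => // ->; rewrite (negbTE ynt).
Qed.

(* If Z (K-1), Z K, Z 0 share a point y, swap position 0 with
   a set missing y. *)
Lemma good_order (T : finType) (K : nat) (Z : 'I_K.+1 -> {set T}) :
  (forall i i', i != i' -> #|Z i :&: Z i'| <= 1) -> (forall y, exists t, y \notin Z t) ->
  exists rho : {perm 'I_K.+1},
    Z (rho (inord K.-1)) :&: Z (rho (inord K)) :&: Z (rho (inord 0)) = set0.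
Proof.
move=> Zpair noCommon; set a := inord K.-1; set b := inord K; set z := inord 0.
have [abz|/set0Pn[y]] := eqVneq (Z a :&: Z b :&: Z z) set0; first by exists 1%g; rewrite !perm1.
rewrite in_setI => /andP[yab yz]; have [t yt] := noCommon y.
have [ta tb tz] : [/\ t != a, t != b & t != z].
  by split; apply: contraNneq yt => ->; move: yab yz; rewrite ?inE => // /andP[].
have [aE bE zE] : [/\ a = K.-1 :> nat, b = K :> nat & z = 0 :> nat].
  by split; rewrite /a /b /z inordK //; lia.
have K2 : 2 <= K by move: ta tb tz (ltn_ord t); rewrite -!(inj_eq val_inj) /= aE bE zE; lia.
have [ab za zb] : [/\ a != b, z != a & z != b].
  by split; rewrite -(inj_eq val_inj) /= ?aE ?bE ?zE; lia.
exists (tperm z t); rewrite tpermL !tpermD // 1?eq_sym //.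
by apply: meet3_avoid yab yt; apply: Zpair.
Qed.

Theorem theorem3 (n k : nat) (Z : 'I_k -> {set 'I_n}) :
  1 <= k -> k <= n ->
  (forall i : 'I_k, #|Z i| = k.-1) ->
  (forall I : {set 'I_k}, I != set0 -> #|\bigcap_(i in I) Z i| <= k - #|I|) ->
  (forall i i' : 'I_k, i != i' -> #|Z i :&: Z i'| <= 1) ->
  exists m : {ffun 'I_n -> nat},
    #|[set c : choice_t n k | is_choice Z c && (munion c.2 == m)]| = 1.
Proof.
case: k Z => [//|K] Z _ _ Zcard Zcap Zpair.
have noCommon y : exists t, y \notin Z t.
  have /Zcap : [set: 'I_K.+1] != set0 by apply/set0Pn; exists ord0.
  rewrite cardsT card_ord subnn leqn0 cards_eq0 => /eqP capT.
  apply/existsP; apply: contraT; rewrite negb_exists => /forallP yZ.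
  suff: y \in set0 by rewrite inE.
  by rewrite -capT; apply/bigcapP => i _; apply/negPn.
have [rho last_pair_W0] := good_order Zpair noCommon.
pose W p := Z (rho (inord p)).
have WE (p : 'I_K.+1) : W p = Z (rho p) by rewrite /W inord_val.
have W_pair p q : p <= K -> q <= K -> p != q -> #|W p :&: W q| <= 1.
  move=> pK qK pq; apply: Zpair; rewrite (inj_eq perm_inj) -(inj_eq val_inj) /=.
  by rewrite !inordK.
have [T T_inv] := layers_exist (fun p _ => Zcard (rho (inord p))) W_pair last_pair_W0.
exists (munion (layer_choice rho T).2).
rewrite (@layer_choice_unique _ _ Z rho T) ?cards1 // => [p|p|p q qp|p q qp].
- by rewrite -WE; have [] := T_inv p (ltn_ord p).
- by have [] := T_inv p (ltn_ord p).
- by have [_ _ prev _ _] := T_inv p (ltn_ord p); rewrite -WE; apply: prev.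
- by rewrite -WE; apply: (meet_prefix_union_lt W_pair T_inv); rewrite qp -ltnS ltn_ord.
Qed.
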